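(* For all real numbers $a,b,c>0$, \[ 2(a+b+c)^{3/2} \leq \left(\sqrt{a+b} + \sqrt{b+c} + \sqrt{c+a}\right) \sqrt{a^2+b^2+c^2+ab+bc+ca}. \] *)

From Stdlib Require Import Reals.

From Stdlib Require Import Reals Lra Psatz.
Open Scope R_scope.

(* With x = sqrt (a + b), y = sqrt (b + c), z = sqrt (c + a) one has
   x^2 + y^2 + z^2 = 2 (a + b + c) and x^4 + y^4 + z^4 = 2 (a^2 + b^2 + c^2 + ab + bc + ca),
   so the squared inequality is the Hoelder-type bound
   (x^2 + y^2 + z^2)^3 <= (x + y + z)^2 (x^4 + y^4 + z^4).  That bound follows by
   chaining the log-convexity estimates S_2^2 <= S_1 S_3 and S_3^2 <= S_2 S_4 of the
   power sums S_k = x^k + y^k + z^k. *)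

Definition power_sum3 (k : nat) (x y z : R) : R := x ^ k + y ^ k + z ^ k.

(* S_k S_(k+2) - S_(k+1)^2 = sum over pairs of (xy)^k (x - y)^2. *)
Lemma power_sum3_log_convex (k : nat) (x y z : R) :
  0 <= x -> 0 <= y -> 0 <= z ->
  power_sum3 (S k) x y z ^ 2 <= power_sum3 k x y z * power_sum3 (S (S k)) x y z.
Proof.
  intros hx hy hz.
  assert (pair_term : forall u v, 0 <= u -> 0 <= v -> 0 <= (u * v) ^ k * (u - v) ^ 2).
  { intros u v hu hv.
    apply Rmult_le_pos; [apply pow_le; nra | apply pow2_ge_0]. }
  pose proof (pair_term x y hx hy). pose proof (pair_term y z hy hz).
  pose proof (pair_term z x hz hx).
  unfold power_sum3; rewrite !Rpow_mult_distr in *; simpl pow.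
  nra.
Qed.

Lemma power_sum3_holder (x y z : R) :
  0 < x -> 0 < y -> 0 < z ->
  power_sum3 2 x y z ^ 3 <= power_sum3 1 x y z ^ 2 * power_sum3 4 x y z.
Proof.
  intros hx hy hz.
  pose proof (power_sum3_log_convex 1 x y z ltac:(lra) ltac:(lra) ltac:(lra)) as c13.
  pose proof (power_sum3_log_convex 2 x y z ltac:(lra) ltac:(lra) ltac:(lra)) as c24.
  assert (pos : forall k, 0 < power_sum3 k x y z).
  { intro k; unfold power_sum3.
    pose proof (pow_lt x k hx); pose proof (pow_lt y k hy); pose proof (pow_lt z k hz).
    lra. }
  set (S1 := power_sum3 1 x y z) in *; set (S2 := power_sum3 2 x y z) in *;
  set (S3 := power_sum3 3 x y z) in *; set (S4 := power_sum3 4 x y z) in *.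
  pose proof (pos 1%nat); pose proof (pos 2%nat).
  assert (S2_pow4_le : S2 ^ 4 <= (S1 * S3) ^ 2).
  { replace (S2 ^ 4) with ((S2 ^ 2) ^ 2) by ring. apply pow_incr; nra. }
  assert (S1S3_sq_le : (S1 * S3) ^ 2 <= S1 ^ 2 * (S2 * S4)).
  { rewrite Rpow_mult_distr. apply Rmult_le_compat_l; [apply pow2_ge_0 | exact c24]. }
  apply Rmult_le_reg_l with S2; [assumption |].
  replace (S2 * S2 ^ 3) with (S2 ^ 4) by ring.
  replace (S2 * (S1 ^ 2 * S4)) with (S1 ^ 2 * (S2 * S4)) by ring.
  lra.
Qed.

Lemma Rpower_3_2 (t : R) : 0 < t -> Rpower t (3 / 2) = t * sqrt t.
Proof.
  intro ht.
  replace (3 / 2) with (1 + / 2) by field.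
  now rewrite Rpower_plus, Rpower_1, Rpower_sqrt.
Qed.

Lemma sqrt_sqr (t : R) : 0 <= t -> sqrt t ^ 2 = t.
Proof. intro ht. rewrite <- Rsqr_pow2. now apply Rsqr_sqrt. Qed.

Theorem mainTheorem6 (a b c : R) (ha : 0 < a) (hb : 0 < b) (hc : 0 < c) :
  2 * Rpower (a + b + c) (3 / 2) <=
  (sqrt (a + b) + sqrt (b + c) + sqrt (c + a)) *
  sqrt (a ^ 2 + b ^ 2 + c ^ 2 + a * b + b * c + c * a).
Proof.
  rewrite Rpower_3_2 by lra.
  set (q := a ^ 2 + b ^ 2 + c ^ 2 + a * b + b * c + c * a).
  assert (hq : 0 <= q) by (unfold q; nra).
  pose proof (power_sum3_holder (sqrt (a + b)) (sqrt (b + c)) (sqrt (c + a))) as holder.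
  unfold power_sum3 in holder; rewrite !pow_1 in holder.
  replace 4%nat with (2 * 2)%nat in holder by reflexivity.
  rewrite !pow_mult, !sqrt_sqr in holder by lra.
  apply Rsqr_incr_0_var.
  - rewrite !Rsqr_pow2, !Rpow_mult_distr, !sqrt_sqr by lra.
    specialize (holder ltac:(apply sqrt_lt_R0; lra) ltac:(apply sqrt_lt_R0; lra)
                       ltac:(apply sqrt_lt_R0; lra)).
    replace ((a + b) + (b + c) + (c + a)) with (2 * (a + b + c)) in holder by ring.
    replace ((a + b) ^ 2 + (b + c) ^ 2 + (c + a) ^ 2) with (2 * q) in holder
      by (unfold q; ring).
    nra.
  - apply Rmult_le_pos; [| apply sqrt_pos].
    pose proof (sqrt_pos (a + b)); pose proof (sqrt_pos (b + c)); pose proof (sqrt_pos (c + a)).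
    lra.
Qed.
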